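(* Let $p_\theta$ be a language model over $\Sigma$ depending differentiably on $\theta\in\mathbb{R}^d$ and $q$ a fixed language model over $\Sigma$ with $\mathrm{KL}(p_\theta\|q)<\infty$. Let $Y^{(1)},\dots,Y^{(M)}$ be i.i.d. samples from $p_\theta$ with eos-padded versions $\bar Y^{(m)}$. Define $$\widehat{\nabla}_{\mathrm{MC}}^{\le N}=\sum_{n=1}^N\frac1M\sum_{m=1}^M\log\frac{\overrightarrow{p}_\theta(\bar Y^{(m)}_n\mid\bar Y^{(m)}_{<n})}{\overrightarrow{q}(\bar Y^{(m)}_n\mid\bar Y^{(m)}_{<n})}\,\nabla_\theta\log\overrightarrow{p}_\theta(\bar Y^{(m)}_{\le N})$$ and $\widehat{\nabla}_{\mathrm{MC}}=\frac1M\sum_{m=1}^M\log\frac{p_\theta(Y^{(m)})}{q(Y^{(m)})}\nabla_\theta\log p_\theta(Y^{(m)})$. Then $\lim_{N\to\infty}\widehat{\nabla}_{\mathrm{MC}}^{\le N}=\widehat{\nabla}_{\mathrm{MC}}$.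
   Context: $\Sigma$ is a finite non-empty alphabet, $\mathrm{eos}\notin\Sigma$, $\bar\Sigma=\Sigma\cup\{\mathrm{eos}\}$. A language model $p$ is a distribution over $\Sigma^*$; $\overrightarrow{p}(x)=\sum_{y\in\Sigma^*}p(xy)$, $\overrightarrow{p}(a\mid x)=\overrightarrow{p}(xa)/\overrightarrow{p}(x)$ for $a\in\Sigma$, $\overrightarrow{p}(\mathrm{eos}\mid x)=p(x)/\overrightarrow{p}(x)$. The eos-padded version $\bar Y$ of $Y\in\Sigma^*$ is $Y$ followed by infinitely many eos symbols; for a sequence $x\notin\Sigma^*$, $\overrightarrow{p}(a\mid x)=\mathbb{1}\{a=\mathrm{eos}\}$ (likewise for $q$). For a finite padded prefix, $\overrightarrow{p}(\bar y_{\le n})=\prod_{k=1}^n\overrightarrow{p}(\bar y_k\mid\bar y_{<k})$. Natural logarithm. *)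

From HB Require Import structures.
From mathcomp Require Import all_boot all_order all_algebra.
From mathcomp Require Import all_classical all_reals all_analysis.
Set Implicit Arguments. Unset Strict Implicit. Unset Printing Implicit Defensive.
Import Order.TTheory GRing.Theory Num.Theory.
Import numFieldNormedType.Exports.
Local Open Scope classical_set_scope.
Local Open Scope ring_scope.

Section LM.
Variables (R : realType) (S : finType).

Definition is_lm (P : seq S -> R) : Prop :=
  (forall y, 0 <= P y) /\ (\esum_(y in [set: seq S]) (P y)%:E = 1%E).

Definition prefp (P : seq S -> R) (x : seq S) : R :=
  fine (\esum_(y in [set: seq S]) (P (x ++ y))%:E).

(* The extended alphabet S ∪ {eos} is  option S,  eos = None. *)
Definition condp (P : seq S -> R) (a : option S) (x : seq (option S)) : R :=
  if all (fun o => o != None) x then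
    let x' := pmap id x in
    match a with
    | Some s => prefp P (rcons x' s) / prefp P x'
    | None => P x' / prefp P x'
    end
  else (a == None)%:R.

(* eos-padded version of y :  ybar y n = \bar y_(n+1)  (0-based index n) *)
Definition ybar (y : seq S) (n : nat) : option S := nth None (map Some y) n.

Definition ypre (y : seq S) (n : nat) : seq (option S) := mkseq (ybar y) n.

Definition prefpad (P : seq S -> R) (y : seq S) (N : nat) : R :=
  \prod_(1 <= k < N.+1) condp P (ybar y k.-1) (ypre y k.-1).

Definition klterm (a b : R) : \bar R :=
  if a == 0 then 0%E else if b == 0 then +oo%E else (a * ln (a / b))%:E.

Definition KL (P Q : seq S -> R) : \bar R :=
  (\esum_(y in [set: seq S]) maxe (klterm (P y) (Q y)) 0%E -
   \esum_(y in [set: seq S]) maxe (- klterm (P y) (Q y))%E 0%E)%E.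

End LM.

Definition grad (R : realType) (d : nat) (f : 'rV[R]_d -> R) (th : 'rV[R]_d)
  : 'rV[R]_d := \row_(i < d) ('D_(delta_mx 0 i) f th).

Definition estN (R : realType) (S : finType) (d M : nat)
  (p : 'rV[R]_d -> seq S -> R) (q : seq S -> R) (th : 'rV[R]_d)
  (Y : 'I_M -> seq S) (N : nat) : 'rV[R]_d :=
  \sum_(1 <= n < N.+1)
    ((M%:R)^-1 *: \sum_(m < M)
       (ln (condp (p th) (ybar (Y m) n.-1) (ypre (Y m) n.-1) /
            condp q (ybar (Y m) n.-1) (ypre (Y m) n.-1))
        *: grad (fun th' => ln (prefpad (p th') (Y m) N)) th)).

Definition estMC (R : realType) (S : finType) (d M : nat)
  (p : 'rV[R]_d -> seq S -> R) (q : seq S -> R) (th : 'rV[R]_d)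
  (Y : 'I_M -> seq S) : 'rV[R]_d :=
  (M%:R)^-1 *: \sum_(m < M)
     (ln (p th (Y m) / q (Y m)) *: grad (fun th' => ln (p th' (Y m))) th).

From HB Require Import structures.
From mathcomp Require Import all_boot all_order all_algebra.
From mathcomp Require Import all_classical all_reals all_analysis.
Import Order.TTheory GRing.Theory Num.Theory.
Import numFieldNormedType.Exports.
Local Open Scope classical_set_scope.
Local Open Scope ring_scope.
Set Implicit Arguments. Unset Strict Implicit.

(* Once N exceeds the length of every sample, the truncated estimator no longer
   depends on N. Along a padded sample y, the next-symbol conditionals
   telescope to the prefix probability of its first N padded symbols, which
   is frozen at p(y) as soon as the padding has started; so
   p->_th'(ybar_{<=N}) = p_th'(y) for every th' and the two gradients coincide.
   In the same way the sum of conditional log-ratios telescopes to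
   ln (p_th(y) / q(y)), which is meaningful because KL(p_th || q) < oo forces
   q(y) > 0 wherever p_th(y) > 0. *)

Lemma le_esum_subset (R : realType) (T : choiceType) (I J : set T)
    (a : T -> \bar R) :
  I `<=` J -> (\esum_(i in I) a i <= \esum_(i in J) a i)%E.
Proof.
move=> IJ; rewrite ge_ereal_sup => //= _ [X [finX XI]] <-.
by apply: esum_ge; exists X => //; split=> // x /XI /IJ.
Qed.

Lemma ln_prod (R : realType) (I : Type) (r : seq I) (P : pred I) (F : I -> R) :
  (forall i, P i -> 0 < F i) ->
  ln (\prod_(i <- r | P i) F i) = \sum_(i <- r | P i) ln (F i).
Proof.
move=> F_gt0.
pose K (x y : R) := 0 < x /\ ln x = y.
suff [] : K (\prod_(i <- r | P i) F i) (\sum_(i <- r | P i) ln (F i)) by [].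
apply: (big_rec2 K); first by split; rewrite ?ln1.
move=> i x y Pi [x_gt0 <-]; split; first by rewrite mulr_gt0 ?F_gt0.
by rewrite lnM ?posrE ?F_gt0.
Qed.

Section prefix_probability.
Variables (R : realType) (S : finType) (P : seq S -> R).
Hypothesis lmP : is_lm P.

Lemma esum_cat_le (x z : seq S) :
  (\esum_(y in [set: seq S]) (P ((x ++ z) ++ y))%:E <=
   \esum_(y in [set: seq S]) (P (x ++ y))%:E)%E.
Proof.
under eq_esum do rewrite -catA.
rewrite -(esum_image _ (cat z) (fun y => (P (x ++ y))%:E)); last first.
  by move=> a b _ _ /(congr1 (drop (size z))); rewrite !drop_size_cat.
by apply: le_esum_subset.
Qed.

Lemma prefpE (x : seq S) :
  (prefp P x)%:E = (\esum_(y in [set: seq S]) (P (x ++ y))%:E)%E.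
Proof.
have sum_ge0 : (0 <= \esum_(y in [set: seq S]) (P (x ++ y))%:E)%E.
  by apply: esum_ge0 => y _; rewrite lee_fin lmP.1.
have sum_le1 : (\esum_(y in [set: seq S]) (P (x ++ y))%:E <= 1)%E.
  by rewrite -lmP.2; exact: (esum_cat_le [::] x).
by rewrite fineK // ge0_fin_numE // (le_lt_trans sum_le1) ?ltry.
Qed.

Lemma prefp_nil : prefp P [::] = 1.
Proof. by rewrite /prefp lmP.2. Qed.

Lemma prefp_cat_le (x z : seq S) : prefp P (x ++ z) <= prefp P x.
Proof. by rewrite -lee_fin !prefpE; exact: esum_cat_le. Qed.

Lemma le_prefp (x : seq S) : P x <= prefp P x.
Proof.
rewrite -lee_fin prefpE -[x in P x]cats0.
rewrite -(@esum_set1 _ _ [::] (fun y => (P (x ++ y))%:E)) ?lee_fin ?lmP.1 //.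
exact: le_esum_subset.
Qed.

End prefix_probability.

Section padded_prefix.
Variables (R : realType) (S : finType).
Implicit Types (P : seq S -> R) (y : seq S).

(* Closed form of p->(ybar_{<=k}): after the first eos only eos can follow. *)
Definition padded_prefp P y (k : nat) : R :=
  if (k <= size y)%N then prefp P (take k y) else P y.

Lemma ypre_take y k : (k <= size y)%N -> ypre y k = map Some (take k y).
Proof.
move=> le_ky; apply: (@eq_from_nth _ None).
  by rewrite size_mkseq size_map size_take; case: ltngtP le_ky.
move=> i; rewrite size_mkseq => lt_ik.
by rewrite nth_mkseq // map_take nth_take.
Qed.

Lemma condp_pad P y k : (k <= size y)%N ->
  condp P (ybar y k) (ypre y k) = padded_prefp P y k.+1 / padded_prefp P y k.
Proof.
move=> le_ky; have all_some : all (fun o => o != None) (map Some (take k y)).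
  by rewrite all_map; apply/allP.
rewrite /condp ypre_take // all_some (@map_pK _ _ id Some (fun=> erefl)).
rewrite /padded_prefp le_ky.
have [eq_ky | lt_ky] := eqVneq k (size y).
  rewrite /ybar nth_default ?size_map ?eq_ky ?ltnn ?take_size //.
have {}lt_ky : (k < size y)%N by rewrite ltn_neqAle lt_ky.
have x0 : S by case: (y) lt_ky => [|a].
by rewrite lt_ky /ybar (nth_map x0) // (take_nth x0).
Qed.

Lemma condp_pad_eos P y k : (size y < k)%N -> condp P (ybar y k) (ypre y k) = 1.
Proof.
move=> lt_yk; have eos_k : ybar y k = None.
  by rewrite /ybar nth_default // size_map ltnW.
have eos_in_ypre : None \in ypre y k.
  have <- : nth None (ypre y k) (size y) = None.
    by rewrite nth_mkseq // /ybar nth_default ?size_map.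
  by apply: mem_nth; rewrite size_mkseq.
by rewrite /condp eos_k; case: ifP => // /allP/(_ _ eos_in_ypre); rewrite eqxx.
Qed.

Section language_model.
Variable P : seq S -> R.
Hypothesis lmP : is_lm P.

Lemma padded_prefp0 y : padded_prefp P y 0 = 1.
Proof. by rewrite /padded_prefp take0 prefp_nil. Qed.

Lemma le_padded_prefp y k : P y <= padded_prefp P y k.
Proof.
rewrite /padded_prefp; case: ifP => // _.
apply: le_trans (le_prefp lmP y) _.
by rewrite -{1}(cat_take_drop k y) prefp_cat_le.
Qed.

Lemma padded_prefp_ge0 y k : 0 <= padded_prefp P y k.
Proof. exact: le_trans (lmP.1 y) (le_padded_prefp y k). Qed.

Lemma padded_prefpS_le y k : padded_prefp P y k.+1 <= padded_prefp P y k.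
Proof.
rewrite {1}/padded_prefp; case: ifP => [lt_ky | _]; last exact: le_padded_prefp.
rewrite /padded_prefp ltnW // -addn1 takeD; exact: prefp_cat_le.
Qed.

Lemma prefpadE y N : prefpad P y N = padded_prefp P y N.
Proof.
elim: N => [|N IHN]; first by rewrite /prefpad big_geq ?padded_prefp0.
rewrite /prefpad big_nat_recr //= -/(prefpad P y N) IHN.
have [le_Ny | lt_yN] := leqP N (size y); last first.
  by rewrite condp_pad_eos // mulr1 /padded_prefp !ifN // -ltnNge // ltnW.
rewrite condp_pad //.
(* With x / 0 = 0 the telescoping survives a vanishing prefix probability,
   since then all later ones vanish too. *)
have [fN_eq0 | fN_neq0] := eqVneq (padded_prefp P y N) 0; last first.
  by rewrite mulrC divfK.
apply/eqP; rewrite fN_eq0 mul0r eq_le padded_prefp_ge0 -fN_eq0.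
exact: padded_prefpS_le.
Qed.

Lemma prefpad_eos y N : (size y < N)%N -> prefpad P y N = P y.
Proof. by move=> lt_yN; rewrite prefpadE /padded_prefp leqNgt lt_yN. Qed.

Lemma condp_pad_gt0 y k : 0 < P y -> 0 < condp P (ybar y k) (ypre y k).
Proof.
move=> Py_gt0; have [le_ky | lt_yk] := leqP k (size y); last first.
  by rewrite condp_pad_eos.
have padded_gt0 j : 0 < padded_prefp P y j.
  exact: lt_le_trans Py_gt0 (le_padded_prefp y j).
by rewrite condp_pad // divr_gt0.
Qed.

End language_model.

End padded_prefix.

Lemma sum_ln_condp_ratio (R : realType) (S : finType) (P Q : seq S -> R)
    (y : seq S) (N : nat) :
  is_lm P -> is_lm Q -> 0 < P y -> 0 < Q y ->
  \sum_(1 <= n < N.+1) ln (condp P (ybar y n.-1) (ypre y n.-1) /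
                          condp Q (ybar y n.-1) (ypre y n.-1)) =
  ln (prefpad P y N / prefpad Q y N).
Proof.
move=> lmP lmQ Py_gt0 Qy_gt0.
have cP_gt0 n : 0 < condp P (ybar y n) (ypre y n) by exact: condp_pad_gt0.
have cQ_gt0 n : 0 < condp Q (ybar y n) (ypre y n) by exact: condp_pad_gt0.
rewrite /prefpad ln_div ?posrE ?prodr_gt0 // !ln_prod // -sumrB.
by apply: eq_bigr => n _; rewrite ln_div ?posrE.
Qed.

Section kl_divergence.
Variable R : realType.
Local Open Scope ereal_scope.

Lemma klterm_negpart_le (a b : R) : (0 <= a)%R -> (0 <= b)%R ->
  maxe (- klterm a b) 0 <= b%:E.
Proof.
move=> a_ge0 b_ge0; rewrite /klterm ge_max lee_fin b_ge0 andbT.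
have [_ | a_neq0] := eqVneq a 0%R; first by rewrite oppe0 lee_fin.
have [_ | b_neq0] := eqVneq b 0%R; first exact: leNye.
have a_gt0 : (0 < a)%R by rewrite lt0r a_neq0.
have b_gt0 : (0 < b)%R by rewrite lt0r b_neq0.
rewrite -EFinN lee_fin -mulrN -lnV ?posrE ?divr_gt0 // invf_div.
have ln_lt := ln_sublinear (divr_gt0 b_gt0 a_gt0).
by apply: le_trans (ler_wpM2l a_ge0 (ltW ln_lt)) _; rewrite mulrC divfK.
Qed.

Lemma KL_lt_pinfty_gt0 (S : finType) (P Q : seq S -> R) (y : seq S) :
  is_lm P -> is_lm Q -> KL P Q < +oo -> (0 < P y)%R -> (0 < Q y)%R.
Proof.
move=> lmP lmQ KL_fin Py_gt0; rewrite lt0r lmQ.1 andbT; apply/negP => /eqP Qy0.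
have posE : \esum_(x in [set: seq S]) maxe (klterm (P x) (Q x)) 0 = +oo.
  apply/eqP; rewrite -leye_eq.
  have <- : maxe (klterm (P y) (Q y)) 0 = +oo.
    by rewrite /klterm Qy0 eqxx (negbTE (lt0r_neq0 Py_gt0)).
  rewrite -(@esum_set1 _ _ y (fun x => maxe (klterm (P x) (Q x)) 0)).
    exact: le_esum_subset.
  by rewrite le_max lexx orbT.
have negE_fin : \esum_(x in [set: seq S]) maxe (- klterm (P x) (Q x)) 0 < +oo.
  apply: le_lt_trans (ltry 1); rewrite -lmQ.2; apply: le_esum => x _.
  exact: klterm_negpart_le (lmP.1 x) (lmQ.1 x).
(* Finiteness of the negative part matters: +oo - +oo = -oo < +oo. *)
move: KL_fin; rewrite /KL posE addye ?ltxx //.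
by rewrite eqe_oppLR /= lt_eqF.
Qed.

End kl_divergence.

Lemma estN_eq_estMC (R : realType) (S : finType) (d M : nat)
    (p : 'rV[R]_d -> seq S -> R) (q : seq S -> R) (th : 'rV[R]_d)
    (Y : 'I_M -> seq S) (N : nat) :
  (forall th', is_lm (p th')) -> is_lm q ->
  (forall m, 0 < p th (Y m)) -> (forall m, 0 < q (Y m)) ->
  (forall m, (size (Y m) < N)%N) ->
  estN p q th Y N = estMC p q th Y.
Proof.
move=> lmp lmq p_gt0 q_gt0 lt_YN.
have grad_eq m : grad (fun th' => ln (prefpad (p th') (Y m) N)) th =
                 grad (fun th' => ln (p th' (Y m))) th.
  by congr grad; apply: funext => th'; rewrite prefpad_eos.
rewrite /estN /estMC; under eq_bigr do under eq_bigr do rewrite grad_eq.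
rewrite -scaler_sumr exchange_big /=; congr (_ *: _).
apply: eq_bigr => m _.
by rewrite -scaler_suml sum_ln_condp_ratio // !prefpad_eos.
Qed.

Theorem lemma3 (R : realType) (S : finType) (d M : nat)
  (p : 'rV[R]_d -> seq S -> R) (q : seq S -> R) (th : 'rV[R]_d)
  (Y : 'I_M -> seq S) :
  (0 < #|S|)%N ->
  (forall th', is_lm (p th')) ->
  (forall th' y, differentiable (fun t => p t y) th') ->
  is_lm q ->
  (KL (p th) q < +oo)%E ->
  (forall m, 0 < p th (Y m)) ->
  estN p q th Y N @[N --> \oo] --> estMC p q th Y.
Proof.
move=> _ lmp _ lmq KL_fin p_gt0.
have q_gt0 m : 0 < q (Y m).
  exact: KL_lt_pinfty_gt0 (lmp th) lmq KL_fin (p_gt0 m).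
apply: cvg_near_cst; exists (\max_(m < M) size (Y m)).+1 => // N /= le_maxN.
apply: estN_eq_estMC => // m; apply: leq_ltn_trans le_maxN.
exact: leq_bigmax.
Qed.
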